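(* Let $X$ be a convex metric space over a Boolean ring $B$, $0\in X$, and suppose every element of $X$ is a convex combination of elements of $\{0,x_{1},\dots,x_{n}\}\subseteq X$, where $\{x_{1},\dots,x_{s}\}$ ($s\le n$) is an orthogonal set. Then there exist $a_{s+1},\dots,a_{n}\in B$ such that $\{x_{1},\dots,x_{s},a_{s+1}x_{s+1},\dots,a_{n}x_{n}\}\setminus\{0\}$ is a referential of $(X,0)$. In particular, every orthogonal subset of a pointed CFG-space $(X,0)$ can be extended to a referential of $(X,0)$.
   Context: $B$ is a Boolean ring ($a\vee b=a+b+ab$, $a\le b\iff ab=a$, $\bar a=1+a$; $a_1\oplus\cdots\oplus a_n$ denotes a sum of pairwise disjoint elements). A Boolean metric space over $B$: set $X$ with $d:X\times X\to B$, $d(x,y)=0\iff x=y$, symmetric, $d(x,z)\le d(x,y)\vee d(y,z)$. For $y_1,\dots,y_m\in X$, $b_i\in B$ with $b_1\oplus\cdots\oplus b_m=1$, $y$ is a convex combination of the $y_i$ with coefficients $b_i$ if $b_id(y,y_i)=0$ for all $i$; $X$ is convex if all such combinations exist; a CFG-space is a convex space all of whose elements are convex combinations of elements of some fixed finite subset. In $(X,0)$: $|x|=d(0,x)$; for $a\in B$, $ax$ denotes the convex combination of $x,0$ with coefficients $a,\bar a$. $x\perp y$ iff $d(x,y)=|x|\vee|y|$; a finite $R\subseteq X$ is orthogonal if $0\notin R$ and distinct elements are orthogonal; a referential of $(X,0)$ is an orthogonal $R$ such that every element of $X$ is a convex combination of elements of $R\cup\{0\}$. *)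

From HB Require Import structures.
From mathcomp Require Import all_boot all_order all_algebra.
Set Implicit Arguments. Unset Strict Implicit. Unset Printing Implicit Defensive.
Import GRing.Theory.
Local Open Scope ring_scope.

Section BooleanMetric.
Variable B : comPzRingType.

Definition boolean_ring := forall a : B, a * a = a.

Definition bleB (a b : B) : Prop := a * b = a.
Definition bjoin (a b : B) : B := a + b + a * b.
Definition bcompl (a : B) : B := 1 + a.

Definition disjoint_partition (m : nat) (b : 'I_m -> B) : Prop :=
  (forall i j : 'I_m, i <> j -> b i * b j = 0) /\ \sum_(i < m) b i = 1.

Variable X : Type.
Variable d : X -> X -> B.

Definition bool_metric : Prop :=
  (forall x y, d x y = 0 <-> x = y) /\
  (forall x y, d x y = d y x) /\
  (forall x y z, bleB (d x z) (bjoin (d x y) (d y z))).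

Definition is_convex_comb (y : X) (m : nat) (ys : 'I_m -> X) (b : 'I_m -> B) : Prop :=
  forall i, b i * d y (ys i) = 0.

Definition convex_space : Prop :=
  forall (m : nat) (ys : 'I_m -> X) (b : 'I_m -> B),
    disjoint_partition b -> exists y, is_convex_comb y ys b.

Definition bm_cc_of (S : X -> Prop) (y : X) : Prop :=
  exists (m : nat) (ys : 'I_m -> X) (b : 'I_m -> B),
    disjoint_partition b /\ (forall i, S (ys i)) /\ is_convex_comb y ys b.

Definition CFG_space : Prop :=
  convex_space /\
  exists (k : nat) (F : 'I_k -> X), forall y, bm_cc_of (fun u => exists i, F i = u) y.

Variable o : X.

Definition bnorm (x : X) : B := d o x.

(* y = a x, i.e. y is the convex combination of x, 0 with coefficients a, 1+a *)
Definition is_smul (a : B) (x y : X) : Prop :=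
  a * d y x = 0 /\ bcompl a * d y o = 0.

Definition bperp (x y : X) : Prop := d x y = bjoin (bnorm x) (bnorm y).

Definition finite_set (R : X -> Prop) : Prop :=
  exists (k : nat) (f : 'I_k -> X), forall u, R u <-> exists i, f i = u.

Definition bm_orthogonal (R : X -> Prop) : Prop :=
  finite_set R /\ ~ R o /\ (forall u v, R u -> R v -> u <> v -> bperp u v).

Definition bm_referential (R : X -> Prop) : Prop :=
  bm_orthogonal R /\ forall y, bm_cc_of (fun u => R u \/ u = o) y.

End BooleanMetric.

(* Put a_i = |x_i| * prod_(j < i) d(x_i, x_j) and
   replace x_i by z_i = a_i x_i for i > s.  Then
   - z_i is orthogonal to every earlier z_j, since on a_i the point x_i is at
     full distance both from 0 and from the earlier points (ext_perp_earlier);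
   - every x_i is recovered from the z's and 0: on a_i it equals z_i, off |x_i|
     it equals 0, and off d(x_i, x_j) it equals the earlier x_j
     (gen_local_comb).
   The spanning argument uses convex combinations that are only valid on an
   element c of B (local_comb); these glue along joins, and gluing over a
   partition of unity yields genuine convex combinations.  The second part of
   the theorem applies the first one to the given orthogonal set followed by a
   finite generating family of the CFG-space. *)

From mathcomp Require Import all_boot all_order all_algebra ring.
From mathcomp Require Import boolp.
Set Implicit Arguments. Unset Strict Implicit.
Import GRing.Theory.
Local Open Scope ring_scope.

Definition cat_family (T : Type) (k1 k2 : nat) (f : 'I_k1 -> T) (g : 'I_k2 -> T)
    (i : 'I_(k1 + k2)) : T :=
  match split i with inl i1 => f i1 | inr i2 => g i2 end.

Lemma cat_family_lshift (T : Type) k1 k2 (f : 'I_k1 -> T) (g : 'I_k2 -> T) (i : 'I_k1) :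
  cat_family f g (lshift k2 i) = f i.
Proof. by rewrite /cat_family (unsplitK (inl i)). Qed.

Lemma cat_family_rshift (T : Type) k1 k2 (f : 'I_k1 -> T) (g : 'I_k2 -> T) (i : 'I_k2) :
  cat_family f g (rshift k1 i) = g i.
Proof. by rewrite /cat_family (unsplitK (inr i)). Qed.

Lemma cat_family_head (T : Type) k1 k2 (f : 'I_k1 -> T) (g : 'I_k2 -> T) (u : T) :
  (exists i : 'I_(k1 + k2), (i < k1)%N /\ cat_family f g i = u) <-> exists i, f i = u.
Proof.
split=> [[i []]|[i <-]]; last first.
  by exists (lshift k2 i); split; [exact: (ltn_ord i) | exact: cat_family_lshift].
rewrite -(splitK i); case: (split i) => [i1|i2] /=.
  by rewrite cat_family_lshift => _ <-; exists i1.
by rewrite ltnNge leq_addr.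
Qed.

Section BooleanMetricSpace.
Variable B : comPzRingType.
Hypothesis hB : boolean_ring B.

Lemma addbb (a : B) : a + a = 0.
Proof.
have h : (a + a) + (a + a) = a + a by rewrite -[RHS]hB mulrDl !mulrDr hB.
by rewrite -[LHS](addrK (a + a)) h subrr.
Qed.

Lemma compl_mulK (a : B) : (1 + a) * a = 0.
Proof. by rewrite mulrDl mul1r hB addbb. Qed.

Lemma compl_compl (a : B) : 1 + (1 + a) = a.
Proof. by rewrite addrA addbb add0r. Qed.

Lemma split_compl (a u : B) : u = a * u + (1 + a) * u.
Proof. by rewrite mulrDl mul1r addrCA -mulrDl addbb mul0r addr0. Qed.

Lemma bjoin_compl (a : B) : bjoin a (1 + a) = 1.
Proof. by rewrite /bjoin mulrC compl_mulK addr0 addrCA addbb addr0. Qed.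

Lemma bjoin_compl2 (e f : B) : bjoin (1 + e) (1 + f) = 1 + e * f.
Proof.
rewrite /bjoin.
have -> : 1 + e + (1 + f) + (1 + e) * (1 + f) = 1 + e * f + (1 + 1) + (e + e) + (f + f) by ring.
by rewrite !addbb !addr0.
Qed.

Lemma disjoint_sum_le (p : nat) (e : 'I_p -> B) (c : B) (j : 'I_p) :
  (forall j k, j <> k -> e j * e k = 0) -> \sum_k e k = c -> e j * c = e j.
Proof.
move=> he <-; rewrite mulr_sumr (bigD1 j) //= hB big1 ?addr0 // => k /eqP kj.
by apply: he => jk; apply: kj.
Qed.

Lemma partition_compl_prod (m : nat) (b : 'I_m -> B) :
  disjoint_partition b -> \prod_k (1 + b k) = 0.
Proof.
case=> hdisj hsum.
have -> : \prod_k (1 + b k) = \prod_k (1 + b k) * \sum_k b k by rewrite hsum mulr1.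
rewrite mulr_sumr big1 // => k _.
by rewrite (bigD1 k) //= mulrAC compl_mulK mul0r.
Qed.

Variables (X : Type) (d : X -> X -> B).
Hypothesis hd : bool_metric d.

Lemma dsym (x y : X) : d x y = d y x.
Proof. by case: hd => _ []. Qed.

Lemma dxx (x : X) : d x x = 0.
Proof. by case: hd => h _; apply/h. Qed.

(* c * d x y = 0 reads "x and y coincide on c". Coinciding points are at the
   same distance, on c, from every third point. *)
Lemma coincide_dist_le (c : B) (x y w : X) :
  c * d x y = 0 -> c * d x w = c * d x w * d y w.
Proof.
move=> hc; case: hd => _ [_ /(_ x y w) tri].
rewrite -[in LHS]tri /bjoin.
have -> : c * (d x w * (d x y + d y w + d x y * d y w)) =
  d x w * (c * d x y) + c * d x w * d y w + d x w * d y w * (c * d x y) by ring.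
by rewrite hc !mulr0 add0r addr0.
Qed.

Lemma coincide_dist (c : B) (x y w : X) : c * d x y = 0 -> c * d x w = c * d y w.
Proof.
move=> hxy; have hyx : c * d y x = 0 by rewrite dsym.
by rewrite (coincide_dist_le w hxy) [RHS](coincide_dist_le w hyx) mulrAC.
Qed.

Lemma bperp_sym (o u v : X) : bperp d o u v -> bperp d o v u.
Proof. by rewrite /bperp dsym => ->; rewrite /bjoin (addrC (bnorm d o u)) mulrC. Qed.

Section LocalCombination.
Variables (p : nat) (w : 'I_p -> X).

(* x is, on c, a convex combination of the w_j: there is a disjoint family e
   with join c such that x coincides with w_j on e_j. On c = 1 this is the
   usual notion of convex combination. *)
Definition local_comb (x : X) (c : B) : Prop :=
  exists e : 'I_p -> B, (forall j k, j <> k -> e j * e k = 0) /\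
    \sum_j e j = c /\ forall j, e j * d x (w j) = 0.

Lemma local_comb0 (x : X) : local_comb x 0.
Proof. by exists (fun=> 0); split; [|split] => *; rewrite ?mul0r ?big1. Qed.

Lemma local_comb_point (j0 : 'I_p) : local_comb (w j0) 1.
Proof.
exists (fun j => (j == j0)%:R); split; [|split].
- move=> j k jk; case: (j =P j0) => [ej|_]; last by rewrite mul0r.
  by case: (k =P j0) => [ek|_]; [case: jk; rewrite ej ek | rewrite mulr0].
- by rewrite (bigD1 j0) //= eqxx big1 ?addr0 // => k /negbTE ->.
- by move=> j; case: (j =P j0) => [->|_]; rewrite ?dxx ?mulr0 ?mul0r.
Qed.

Lemma local_comb_restrict (x y : X) (b c : B) :
  local_comb y c -> b * d x y = 0 -> local_comb x (b * c).
Proof.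
move=> [e [he [hsum hcc]]] hb; exists (fun j => b * e j); split; [|split].
- by move=> j k jk; rewrite mulrACA hB he // mulr0.
- by rewrite -mulr_sumr hsum.
- by move=> j; rewrite mulrAC (coincide_dist _ hb) mulrAC -mulrA hcc mulr0.
Qed.

Lemma local_comb_join (x : X) (c c' : B) :
  local_comb x c -> local_comb x c' -> local_comb x (bjoin c c').
Proof.
move=> [e [he [hesum hecc]]] [f [hf [hfsum hfcc]]].
have he_out j : e j * (1 + c) = 0.
  by rewrite mulrDr mulr1 (disjoint_sum_le j he hesum) addbb.
exists (fun j => e j + (1 + c) * f j); split; [|split].
- move=> j k jk.
  have -> : (e j + (1 + c) * f j) * (e k + (1 + c) * f k) =
    e j * e k + e j * (1 + c) * f k + e k * (1 + c) * f j
    + (1 + c) * (1 + c) * (f j * f k) by ring.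
  by rewrite he // hf // !he_out !mul0r !mulr0 !addr0.
- by rewrite big_split /= -mulr_sumr hesum hfsum /bjoin; ring.
- by move=> j; rewrite mulrDl -mulrA hecc hfcc mulr0 addr0.
Qed.

Lemma local_comb_compl_prod (x : X) (I : Type) (r : seq I) (P : pred I) (F : I -> B) :
  (forall i, P i -> local_comb x (1 + F i)) ->
  local_comb x (1 + \prod_(i <- r | P i) F i).
Proof.
move=> hF; apply: (big_ind (fun t => local_comb x (1 + t))) => //.
- by rewrite addbb; exact: local_comb0.
- by move=> e f he hf; rewrite -bjoin_compl2; exact: local_comb_join.
Qed.

Lemma local_comb_partition (x : X) (m : nat) (b : 'I_m -> B) :
  disjoint_partition b -> (forall k, local_comb x (b k)) -> local_comb x 1.
Proof.
move=> hb hloc; rewrite -[1]addr0 -(partition_compl_prod hb).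
by apply: local_comb_compl_prod => k _; rewrite compl_compl.
Qed.

Lemma cc_of_local_comb (S : X -> Prop) (x : X) :
  (forall j, S (w j)) -> local_comb x 1 -> bm_cc_of d S x.
Proof. by move=> hS [e [he [hsum hcc]]]; exists p, w, e. Qed.

End LocalCombination.

Lemma finite_set_filter (k : nat) (f : 'I_k -> X) (P : X -> Prop) :
  finite_set (fun u => P u /\ exists i, f i = u).
Proof.
pose A := [pred i : 'I_k | `[< P (f i) >]].
exists #|A|, (fun m => f (enum_val m)) => u; split.
- move=> [hP [i fi]]; have Ai : i \in A by apply/asboolP; rewrite fi.
  by exists (enum_rank_in Ai i); rewrite enum_rankK_in.
- move=> [m <-]; split; last by exists (enum_val m).
  by have /asboolP := enum_valP m.
Qed.

Variable o : X.
Hypothesis hconv : convex_space d.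

Lemma smul_exists (a : B) (x : X) : exists z, is_smul d o a x z.
Proof.
pose ys : 'I_2 -> X := fun k => if val k == 0%N then x else o.
pose b : 'I_2 -> B := fun k => if val k == 0%N then a else 1 + a.
have hb : disjoint_partition b.
  split; last by rewrite big_ord_recl big_ord1 /= addrCA addbb addr0.
  move=> [[|[|i]] hi] [[|[|j]] hj] //= ij; try by case: ij; apply: val_inj.
  - by rewrite mulrC compl_mulK.
  - by rewrite compl_mulK.
have [z hz] := hconv ys hb.
by exists z; split; [exact: (hz ord0) | exact: (hz ord_max)].
Qed.

Lemma smul_dist (a : B) (x z w : X) :
  is_smul d o a x z -> d z w = a * d x w + (1 + a) * d o w.
Proof.
move=> [hx ho]; rewrite {1}(split_compl a (d z w)).
by rewrite (coincide_dist _ hx) (coincide_dist _ ho).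
Qed.

Lemma smul_norm (a : B) (x z : X) : is_smul d o a x z -> d o z = a * d o x.
Proof. by move=> hz; rewrite dsym (smul_dist _ hz) dxx mulr0 addr0 dsym. Qed.

Section Extension.
Variables (n s : nat) (x : 'I_n -> X).
Hypothesis horth : bm_orthogonal d o (fun u => exists i : 'I_n, (i < s)%N /\ x i = u).
Hypothesis hspan : forall y, bm_cc_of d (fun u => u = o \/ exists i, x i = u) y.

(* a_i = |x_i| * prod_(j < i) d(x_i, x_j): the part where x_i is nonzero and
   differs from all earlier generators. *)
Definition ext_coef (i : 'I_n) : B :=
  d o (x i) * \prod_(j < n | (j < i)%N) d (x i) (x j).

Definition ext (i : 'I_n) : X :=
  if (i < s)%N then x i else proj1_sig (cid (smul_exists (ext_coef i) (x i))).

Lemma ext_head (i : 'I_n) : (i < s)%N -> ext i = x i.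
Proof. by rewrite /ext => ->. Qed.

Lemma ext_tail (i : 'I_n) : (s <= i)%N -> is_smul d o (ext_coef i) (x i) (ext i).
Proof. by rewrite /ext leqNgt => /negbTE ->; exact: proj2_sig (cid _). Qed.

Lemma ext_coef_norm (i : 'I_n) : ext_coef i * d o (x i) = ext_coef i.
Proof. by rewrite /ext_coef mulrAC hB. Qed.

Lemma ext_coef_dist (i j : 'I_n) : (j < i)%N -> ext_coef i * d (x i) (x j) = ext_coef i.
Proof.
move=> ji; rewrite /ext_coef (bigD1 j) //=.
by rewrite -mulrA [_ * d (x i) (x j)]mulrAC (hB (d (x i) (x j))).
Qed.

Lemma ext_coef_dist_ext (i j : 'I_n) :
  (j < i)%N -> ext_coef i * d (x i) (ext j) = ext_coef i.
Proof.
move=> ji; case: (ltnP j s) => js; first by rewrite ext_head // ext_coef_dist.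
rewrite dsym (smul_dist _ (ext_tail js)) mulrDr.
rewrite [ext_coef i * (_ * d (x j) _)]mulrCA [ext_coef i * (_ * d o _)]mulrCA.
by rewrite (dsym (x j)) ext_coef_dist // ext_coef_norm -split_compl.
Qed.

Lemma ext_perp_earlier (i j : 'I_n) :
  (s <= i)%N -> (j < i)%N -> bperp d o (ext i) (ext j).
Proof.
move=> si ji; have hz := ext_tail si.
rewrite /bperp /bnorm (smul_dist _ hz) (smul_norm hz) ext_coef_norm.
by rewrite ext_coef_dist_ext // /bjoin; ring.
Qed.

Lemma ext_perp (i j : 'I_n) : ext i <> ext j -> bperp d o (ext i) (ext j).
Proof.
wlog ji : i j / (j < i)%N.
  move=> hwlog uv; case: (ltngtP i j) => [ij|ji|/val_inj ij]; last by case: uv; rewrite ij.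
  - by apply/bperp_sym/hwlog => // vu; apply: uv; rewrite vu.
  - exact: hwlog.
move=> uv; case: (ltnP i s) => is_; last exact: ext_perp_earlier.
have js := ltn_trans ji is_.
case: horth => _ [_ perp]; move: uv; rewrite !ext_head //.
by apply: perp; [exists i | exists j].
Qed.

Definition ext0 (j : 'I_n.+1) : X :=
  if unlift ord_max j is Some i then ext i else o.

Lemma ext0_lift (i : 'I_n) : ext0 (lift ord_max i) = ext i.
Proof. by rewrite /ext0 liftK. Qed.

Lemma ext0_max : ext0 ord_max = o.
Proof. by rewrite /ext0 unlift_none. Qed.

(* Every generator is a convex combination of the extension and 0: on a_i it
   is a_i x_i, off |x_i| it is 0, and off d(x_i, x_j) it is an earlier x_j. *)
Lemma gen_local_comb (k : nat) (i : 'I_n) : (i < k)%N -> local_comb ext0 (x i) 1.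
Proof.
elim: k i => [//|k IH] i ik.
case: (ltnP i s) => is_; first by rewrite -ext_head // -ext0_lift; exact: local_comb_point.
have hx := proj1 (ext_tail is_).
have on_coef : local_comb ext0 (x i) (ext_coef i).
  rewrite -[ext_coef i]mulr1; apply: (local_comb_restrict (y := ext i)).
    by rewrite -ext0_lift; exact: local_comb_point.
  by rewrite dsym hx.
have off_coef : local_comb ext0 (x i) (1 + ext_coef i).
  rewrite /ext_coef -bjoin_compl2; apply: local_comb_join.
    rewrite -[1 + _]mulr1; apply: (local_comb_restrict (y := o)).
      by rewrite -ext0_max; exact: local_comb_point.
    by rewrite dsym compl_mulK.
  apply: local_comb_compl_prod => j ji.
  rewrite -[1 + _]mulr1; apply: (local_comb_restrict (y := x j)).
    by apply: IH; exact: leq_trans ji ik.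
  exact: compl_mulK.
by rewrite -(bjoin_compl (ext_coef i)); exact: local_comb_join.
Qed.

Lemma ext_spans (y : X) :
  bm_cc_of d (fun u => (u <> o /\ exists i, ext i = u) \/ u = o) y.
Proof.
apply: (cc_of_local_comb (w := ext0)).
  move=> j; rewrite /ext0; case: unlift => [i|]; last by right.
  by case: (pselect (ext i = o)) => h; [right | left; split => //; exists i].
have [m [ys [b [hb [hys hcc]]]]] := hspan y.
apply: (local_comb_partition hb) => k.
rewrite -[b k]mulr1; apply: (local_comb_restrict (y := ys k)); last exact: hcc.
case: (hys k) => [->|[i <-]]; last exact: (gen_local_comb (ltnSn i)).
by rewrite -ext0_max; exact: local_comb_point.
Qed.

Theorem ext_referential : bm_referential d o (fun u => u <> o /\ exists i, ext i = u).
Proof.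
split; last exact: ext_spans.
split; first exact: finite_set_filter.
split; first by case.
by move=> u v [_ [i <-]] [_ [j <-]]; exact: ext_perp.
Qed.

End Extension.

Theorem cfg_orthogonal_extension (R : X -> Prop) :
  CFG_space d -> bm_orthogonal d o R ->
  exists R' : X -> Prop, (forall u, R u -> R' u) /\ bm_referential d o R'.
Proof.
move=> [_ [k [F hF]]] hR; have [[kR [fR hfR]] [hRo _]] := hR.
pose x := cat_family fR F.
have hspan y : bm_cc_of d (fun u => u = o \/ exists i, x i = u) y.
  have [m [ys [b [hb [hys hcc]]]]] := hF y.
  exists m, ys, b; split=> //; split=> // j; right.
  by have [i <-] := hys j; exists (rshift kR i); exact: cat_family_rshift.
have horth : bm_orthogonal d o (fun u => exists i : 'I_(kR + k), (i < kR)%N /\ x i = u).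
  suff -> : (fun u => exists i : 'I_(kR + k), (i < kR)%N /\ x i = u) = R by [].
  by apply/funext => u; apply/propext; rewrite cat_family_head hfR.
exists (fun u => u <> o /\ exists i, ext kR x i = u).
split; last exact: ext_referential.
move=> u Ru; split; first by move=> uo; apply: hRo; rewrite -uo.
have [i1 <-] := proj1 (hfR u) Ru.
have head : (lshift k i1 < kR)%N := ltn_ord i1.
by exists (lshift k i1); rewrite ext_head // /x cat_family_lshift.
Qed.

End BooleanMetricSpace.

Theorem mainTheorem12 (B : comPzRingType) (hB : boolean_ring B)
  (X : Type) (d : X -> X -> B) (hd : bool_metric d) (hconv : convex_space d)
  (o : X) :
  (forall (n s : nat) (x : 'I_n -> X),
     (s <= n)%N ->
     (forall y, bm_cc_of d (fun u => u = o \/ exists i, x i = u) y) ->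
     bm_orthogonal d o (fun u => exists i : 'I_n, (i < s)%N /\ x i = u) ->
     exists (a : 'I_n -> B) (z : 'I_n -> X),
       (forall i : 'I_n, (i < s)%N -> z i = x i) /\
       (forall i : 'I_n, (s <= i)%N -> is_smul d o (a i) (x i) (z i)) /\
       bm_referential d o (fun u => u <> o /\ exists i, z i = u))
  /\
  (CFG_space d ->
     forall R : X -> Prop, bm_orthogonal d o R ->
       exists R' : X -> Prop, (forall u, R u -> R' u) /\ bm_referential d o R').
Proof.
split=> [n s x _ hspan horth | hcfg R hR].
- exists (ext_coef d o x), (ext hB o hconv s x); split; [exact: ext_head|split].
  + exact: ext_tail.
  + exact: ext_referential.
- exact: cfg_orthogonal_extension.
Qed.
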